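(* Let $M \neq \{0\}$ be a semiideal of $\mathbb{N}_0$ of period $d$. Then the quotient $\mathbb{N}_0/M$ is isomorphic to $\mathbb{Z}/(d)$ (as $\mathbb{N}_0$-semimodules, i.e. commutative monoids).
   Context: $\mathbb{N}_0$ is the semiring of natural numbers including $0$. A semiideal of $\mathbb{N}_0$ is a nonempty subset closed under addition and multiplication by elements of $\mathbb{N}_0$. For a semiideal $M\neq 0$, a difference of $M$ is an element $e \in \mathbb{N}$ with $x+e=y$ for some $x,y\in M$, $x\neq 0$; the period of $M$ is the minimal difference. $\mathbb{N}_0/M$ denotes the set of equivalence classes of the congruence relation $n \sim_M n' \iff \exists a, b \in M: n + a = n' + b$, with addition $\bar n + \bar n' = \overline{n+n'}$. $\mathbb{Z}/(d)$ is regarded as a commutative monoid under addition. *)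

From mathcomp Require Import all_boot.
Set Implicit Arguments. Unset Strict Implicit. Unset Printing Implicit Defensive.

Definition semiideal (M : nat -> Prop) : Prop :=
  (exists x, M x) /\
  (forall x y, M x -> M y -> M (x + y)) /\
  (forall n x, M x -> M (n * x)).

Definition is_difference (M : nat -> Prop) (e : nat) : Prop :=
  0 < e /\ exists x y, M x /\ M y /\ x <> 0 /\ x + e = y.

Definition is_period (M : nat -> Prop) (d : nat) : Prop :=
  is_difference M d /\ forall e, is_difference M e -> d <= e.

Definition congM (M : nat -> Prop) (n n' : nat) : Prop :=
  exists a b, M a /\ M b /\ n + a = n' + b.

Definition zd_add (d : nat) (u v : 'I_d) : nat := (val u + val v) %% d.

(* N_0/M is isomorphic to Z/(d) as commutative monoids: by the universal
   property of the quotient, this means there is a monoid homomorphism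
   f : N_0 -> Z/(d) which is surjective and whose kernel congruence is
   exactly ~_M (so f induces an isomorphism N_0/M ~= Z/(d)). *)
Definition quotient_iso_Zd (M : nat -> Prop) (d : nat) : Prop :=
  exists f : nat -> 'I_d,
    val (f 0) = 0 /\
    (forall n m, val (f (n + m)) = zd_add (f n) (f m)) /\
    (forall u : 'I_d, exists n, f n = u) /\
    (forall n n', f n = f n' <-> congM M n n').

(* Every element of M is a multiple of the period d: otherwise, adding a
   suitable multiple of a difference pair (x, x + d) to it would produce a
   positive difference smaller than d.  Conversely n ~_M n + k d, witnessed by
   k x and k (x + d).  Hence ~_M is congruence modulo d, and reduction modulo d
   induces the isomorphism N_0/M ~= Z/(d). *)
From mathcomp Require Import all_boot.
From mathcomp Require Import zify.

Set Implicit Arguments.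
Unset Strict Implicit.
Unset Printing Implicit Defensive.

Lemma congM_sym (M : nat -> Prop) (n n' : nat) : congM M n n' -> congM M n' n.
Proof. by move=> [a [b [Ma [Mb E]]]]; exists b, a. Qed.

Section Period.

Variables (M : nat -> Prop) (d : nat).
Hypotheses (semiM : semiideal M) (perM : is_period M d).

Lemma period_gt0 : 0 < d.
Proof. by case: perM => [[]]. Qed.

Lemma semiideal_addr x y : M x -> M y -> M (x + y).
Proof. by case: semiM => _ [addM _]; apply: addM. Qed.

Lemma semiideal_mull k x : M x -> M (k * x).
Proof. by case: semiM => _ [_ mulM]; apply: mulM. Qed.

Lemma period_pair : exists x, [/\ M x, M (x + d) & x <> 0].
Proof. by case: perM => [[_ [x [y [Mx [My [x0 Ey]]]]]] _]; exists x; rewrite Ey. Qed.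

Lemma dvdn_period m : M m -> d %| m.
Proof.
move=> Mm; have [x [Mx Mxd x0]] := period_pair.
have [_ min_d] := perM.
rewrite /dvdn; apply: contraT; rewrite -lt0n => r_gt0.
(* k (x + d) - (m + k x) = k d - m = d - m %% d. *)
pose k := (m %/ d).+1.
have r_lt_d : m %% d < d by rewrite ltn_mod period_gt0.
suff : d <= d - m %% d by lia.
apply: min_d; split; first lia.
exists (m + k * x), (k * (x + d)).
split; first exact: semiideal_addr Mm (semiideal_mull _ Mx).
split; first exact: semiideal_mull.
split; first by rewrite /k; nia.
by rewrite mulnDr /k mulSn {1}(divn_eq m d); lia.
Qed.

Lemma congM_eqmod n n' : congM M n n' -> n = n' %[mod d].
Proof.
move=> [a [b [Ma [Mb E]]]].
have /eqP Ea := dvdn_period Ma; have /eqP Eb := dvdn_period Mb.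
by rewrite -[n]addn0 -Ea modnDmr E -modnDmr Eb addn0.
Qed.

Lemma congM_addr_period n k : congM M n (n + k * d).
Proof.
have [x [Mx Mxd _]] := period_pair.
exists (k * (x + d)), (k * x).
by split; [|split]; [exact: semiideal_mull | exact: semiideal_mull | rewrite mulnDr; lia].
Qed.

Lemma eqmod_congM n n' : n = n' %[mod d] -> congM M n n'.
Proof.
wlog le_nn' : n n' / n <= n' => [hwlog|].
  case: (leqP n n') => [|/ltnW] le; first exact: hwlog.
  by move/esym/(hwlog _ _ le)/congM_sym.
move/esym/eqP; rewrite eqn_mod_dvd // => /dvdnP [k Ek].
by rewrite -(subnKC le_nn') Ek; apply: congM_addr_period.
Qed.

Lemma congM_modP n n' : congM M n n' <-> n = n' %[mod d].
Proof. by split; [exact: congM_eqmod | exact: eqmod_congM]. Qed.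

End Period.

Theorem theorem4p13 (M : nat -> Prop) (d : nat) :
  semiideal M ->
  (exists x, M x /\ x <> 0) ->
  is_period M d ->
  quotient_iso_Zd M d.
Proof.
(* M <> 0 is already implied by the existence of a period. *)
move=> semiM _ perM.
exists (fun n => Ordinal (ltn_pmod n (period_gt0 perM))).
split; first by rewrite /= mod0n.
split; first by move=> n m; rewrite /zd_add /= modnDm.
split; first by move=> u; exists (val u); apply: val_inj; rewrite /= modn_small.
move=> n n'; rewrite (congM_modP semiM perM).
by split => [/(congr1 val) | E]; last exact: val_inj.
Qed.
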